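(* Let $p^*\in[0,1]$ and let $o^{(1)},o^{(2)},\dots$ be i.i.d. binary observations with $\Pr[o^{(t)}=1]=p^*$. Fix $\beta\in(0,1]$ and an arbitrary initial estimate $\hat p^{(1)}\in[0,1]$, and define $\hat p^{(t+1)}=(1-\beta)\hat p^{(t)}+\beta\,[o^{(t)}=1]$. Then the expected first time $t$ at which $\hat p^{(t)}$ lies in the band $[p^*-\beta,\,p^*+\beta]$ is bounded by $O(\beta^{-2})$. Moreover, the number of updates required for this first visit is lower bounded by $\Omega(\beta^{-1})$ (in the worst case over the initial estimate).
   Context: This is the fixed-rate (''static'') sparse exponential moving average (EMA) estimate of the probability of a single item in the stationary binary setting; $[\cdot]$ denotes the indicator. *)

From HB Require Import structures.
From mathcomp Require Import all_boot all_order all_algebra.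
From mathcomp Require Import all_classical all_reals all_analysis.
Set Implicit Arguments. Unset Strict Implicit. Unset Printing Implicit Defensive.
Import Order.TTheory GRing.Theory Num.Theory.
Local Open Scope classical_set_scope.
Local Open Scope ring_scope.

(* o : nat -> T -> bool is an i.i.d. sequence of Bernoulli(p) observations on
   the probability space (T, P): each event {o n = 1} is measurable and the
   joint law of every finite prefix o 0, ..., o (n-1) is the product law.
   (o n is the paper's o^(n+1).) *)
Definition iid_bernoulli (R : realType) (d : measure_display)
  (T : measurableType d) (P : probability T R) (o : nat -> T -> bool) (p : R)
  : Prop :=
  (forall n, measurable [set w | o n w]) /\
  (forall (n : nat) (b : nat -> bool),
      P [set w | forall i, (i < n)%N -> o i w = b i] =
      (\prod_(i < n) (if b i then p else 1 - p))%:E).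

(* est beta p1 o n w is the paper's \hat p^{(n+1)}:
   \hat p^{(1)} = p1, \hat p^{(t+1)} = (1-beta) \hat p^{(t)} + beta [o^{(t)} = 1]. *)
Fixpoint est (R : realType) (T : Type) (beta p1 : R) (o : nat -> T -> bool)
  (n : nat) (w : T) : R :=
  match n with
  | 0 => p1
  | n'.+1 => (1 - beta) * est beta p1 o n' w + beta * (o n' w)%:R
  end.

(* First time t >= 1 (paper's indexing) at which \hat p^{(t)} lies in
   [p - beta, p + beta]; +oo if never. *)
Definition hit_time (R : realType) (T : Type) (p beta p1 : R)
  (o : nat -> T -> bool) (w : T) : \bar R :=
  ereal_inf [set ((n.+1)%:R)%:E | n in
             [set n | p - beta <= est beta p1 o n w <= p + beta]].

(* Outside the band [p - beta, p + beta] the expected increment of the estimate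
   is beta (p - x), which points towards p and has size at least beta^2, while a
   single step moves the estimate by at most beta, so it cannot cross p before
   entering the band. Hence the potential 1 - x (below p) or x (above p)
   decreases by at least beta^2 per step in expectation, and additive drift
   bounds the expected hitting time by 1 + beta^-2. Truncating at a finite
   horizon turns expectations into finite sums over bit strings, and monotone
   convergence passes to the limit. Conversely, as a step moves the estimate by
   at most beta, starting at distance at least 1/2 from p costs at least
   1/(2 beta) steps. *)

From HB Require Import structures.
From mathcomp Require Import all_boot all_order all_algebra.
From mathcomp Require Import all_classical all_reals all_analysis.
From mathcomp Require Import ring lra measurable_realfun.
Import Order.TTheory GRing.Theory Num.Theory.
Set Implicit Arguments. Unset Strict Implicit. Unset Printing Implicit Defensive.
Local Open Scope classical_set_scope.
Local Open Scope ring_scope.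

Fixpoint bool_seqs (m : nat) : seq (seq bool) :=
  if m is m'.+1 then
    [seq true :: s | s <- bool_seqs m'] ++ [seq false :: s | s <- bool_seqs m']
  else [:: [::]].

Lemma mem_map_cons (T : eqType) (c b : T) s l :
  (b :: s \in [seq c :: t | t <- l]) = (b == c) && (s \in l).
Proof.
elim: l => [|t l IH]; first by rewrite in_nil andbF.
by rewrite map_cons inE IH eqseq_cons -andb_orr.
Qed.

Lemma mem_bool_seqs m s : (s \in bool_seqs m) = (size s == m).
Proof.
elim: m s => [|m IH] [|b s] //=; rewrite ?inE // mem_cat.
  by apply/negbTE/negP => /orP[] /mapP[].
by rewrite !mem_map_cons eqSS -IH; case: b; rewrite /= ?orbF.
Qed.

Lemma uniq_bool_seqs m : uniq (bool_seqs m).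
Proof.
elim: m => //= m IH; rewrite cat_uniq !map_inj_uniq ?IH //=; try by move=> ? ? [].
rewrite andbT; apply/hasPn => _ /mapP[s _ ->].
by rewrite mem_map_cons.
Qed.

Lemma take_mkseq (T : Type) (g : nat -> T) k m :
  (k <= m)%N -> take k (mkseq g m) = mkseq g k.
Proof. by move=> km; rewrite /mkseq -map_take take_iota (minn_idPl km). Qed.

Section BernoulliExpectation.
Variables (R : pzRingType) (p : R).

Definition bweight (s : seq bool) : R := \prod_(b <- s) (if b then p else 1 - p).

Definition bexpect (m : nat) (g : seq bool -> R) : R :=
  \sum_(s <- bool_seqs m) bweight s * g s.

Lemma bexpect0 g : bexpect 0 g = g [::].
Proof. by rewrite /bexpect big_seq1 /bweight big_nil mul1r. Qed.

Lemma bexpectS m g : bexpect m.+1 g =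
  p * bexpect m (fun s => g (true :: s)) + (1 - p) * bexpect m (fun s => g (false :: s)).
Proof.
rewrite /bexpect big_cat !big_map !mulr_sumr.
by congr (_ + _); apply: eq_bigr => s _; rewrite /bweight big_cons mulrA.
Qed.

Lemma eq_bexpect m g h : (forall s, g s = h s) -> bexpect m g = bexpect m h.
Proof. by move=> gh; apply: eq_bigr => s _; rewrite gh. Qed.

Lemma bexpect_cst m c : bexpect m (fun _ => c) = c.
Proof.
elim: m => [|m IH]; first exact: bexpect0.
by rewrite bexpectS IH -mulrDl addrC subrK mul1r.
Qed.

Lemma bexpectDl m c g : bexpect m (fun s => c + g s) = c + bexpect m g.
Proof.
by rewrite -[c in RHS](bexpect_cst m) /bexpect -big_split; apply: eq_bigr => s _; rewrite mulrDr.
Qed.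

End BernoulliExpectation.

Lemma bexpect_succn (R : pzRingType) (p : R) m (n : seq bool -> nat) :
  bexpect p m (fun s => (n s).+1%:R) = 1 + bexpect p m (fun s => (n s)%:R).
Proof. by rewrite -bexpectDl; apply: eq_bexpect => s; rewrite nat1r. Qed.

Section AdditiveDrift.
Variables (X : Type) (f : X -> bool -> X) (A : pred X).

Fixpoint steps_to (x : X) (s : seq bool) : nat :=
  if s is b :: s' then (if A x then 0 else (steps_to (f x b) s').+1) else 0.

Lemma steps_to_hit x s k : (k <= size s)%N -> A (foldl f x (take k s)) ->
  (forall j, (j < k)%N -> ~~ A (foldl f x (take j s))) -> steps_to x s = k.
Proof.
elim: s x k => [|b s IH] x [|k] //=; first by move=> _ ->.
move=> lek Ak before; rewrite (negbTE (before 0%N isT)) (IH _ k) //.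
by move=> j ltjk; apply: (before j.+1).
Qed.

Lemma steps_to_miss x s :
  (forall j, (j < size s)%N -> ~~ A (foldl f x (take j s))) -> steps_to x s = size s.
Proof.
elim: s x => [|b s IH] x //= never; rewrite (negbTE (never 0%N isT)) IH //.
by move=> j ltjs; apply: (never j.+1).
Qed.

Lemma steps_to_catl x s t : (steps_to x s <= steps_to x (s ++ t))%N.
Proof. by elim: s x => //= b s IH x; case: (A x); rewrite /= ?ltnS. Qed.

Variables (R : realDomainType) (p delta : R) (S : pred X) (V : X -> R).
Hypotheses (p01 : 0 <= p <= 1) (f_stable : forall x b, S x -> S (f x b))
  (V_ge0 : forall x, S x -> 0 <= V x)
  (V_drift : forall x, S x -> ~~ A x ->
     p * V (f x true) + (1 - p) * V (f x false) + delta <= V x).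

Lemma bexpect_steps_to_le m x : S x ->
  delta * bexpect p m (fun s => (steps_to x s)%:R) <= V x.
Proof.
have /andP[p_ge0 p_le1] := p01.
elim: m x => [|m IH] x Sx; first by rewrite bexpect0 mulr0 V_ge0.
rewrite bexpectS /=; have [Ax|nAx] := boolP (A x).
  by rewrite !bexpect_cst mulr0n !mulr0 addr0 mulr0 V_ge0.
rewrite !bexpect_succn.
set Et := bexpect _ _ _; set Ef := bexpect _ _ _.
have le_t : p * (delta * Et) <= p * V (f x true).
  by apply: ler_wpM2l => //; apply: IH; apply: f_stable.
have le_f : (1 - p) * (delta * Ef) <= (1 - p) * V (f x false).
  by apply: ler_wpM2l; rewrite ?subr_ge0 //; apply: IH; apply: f_stable.
have := V_drift Sx nAx; lra.
Qed.

End AdditiveDrift.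

Section EmaStep.
Variable R : realFieldType.
Implicit Types (p beta x : R) (b : bool).

Definition ema_step beta x b : R := (1 - beta) * x + beta * b%:R.

Definition in_band p beta x : bool := p - beta <= x <= p + beta.

Lemma ema_step_in01 beta x b : 0 <= beta <= 1 -> 0 <= x <= 1 ->
  0 <= ema_step beta x b <= 1.
Proof.
move=> /andP[beta_ge0 beta_le1] /andP[x_ge0 x_le1]; rewrite /ema_step.
have : 0 <= (1 - beta) * x <= 1 - beta.
  by rewrite mulr_ge0 ?subr_ge0 //= ler_piMr ?subr_ge0.
by case: b; rewrite /= ?mulr1 ?mulr0; lra.
Qed.

Lemma ema_step_dist beta x b : 0 <= beta <= 1 -> 0 <= x <= 1 ->
  `|ema_step beta x b - x| <= beta.
Proof.
move=> /andP[beta_ge0 beta_le1] /andP[x_ge0 x_le1].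
have -> : ema_step beta x b - x = beta * (b%:R - x) by rewrite /ema_step; ring.
rewrite normrM ger0_norm // ler_piMr // ler_norml.
by case: b; rewrite /= ?mulr1; lra.
Qed.

Lemma ema_step_mean p beta x :
  p * ema_step beta x true + (1 - p) * ema_step beta x false = x + beta * (p - x).
Proof. by rewrite /ema_step /=; ring. Qed.

Definition ema_potential p x : R := if x <= p then 1 - x else x.

Lemma ema_potential_ge0 p x : 0 <= x <= 1 -> 0 <= ema_potential p x.
Proof. by move=> /andP[x_ge0 x_le1]; rewrite /ema_potential; case: ifP; lra. Qed.

Lemma ema_potential_le1 p x : 0 <= x <= 1 -> ema_potential p x <= 1.
Proof. by move=> /andP[x_ge0 x_le1]; rewrite /ema_potential; case: ifP; lra. Qed.

Lemma ema_potential_drift p beta x :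
  0 < beta <= 1 -> 0 <= x <= 1 -> ~~ in_band p beta x ->
  p * ema_potential p (ema_step beta x true)
  + (1 - p) * ema_potential p (ema_step beta x false) + beta ^+ 2
  <= ema_potential p x.
Proof.
move=> /andP[beta_gt0 beta_le1] x01 out.
have near_x b : x - beta <= ema_step beta x b <= x + beta.
  by rewrite -ler_distl ema_step_dist // ltW.
have := ema_step_mean p beta x; rewrite expr2 /ema_potential.
move: out; rewrite /in_band negb_and -!ltNge => /orP[below|above].
- have below_p b : ema_step beta x b <= p by have /andP[_] := near_x b; lra.
  rewrite !below_p ifT; last by lra.
  have : beta * beta <= beta * (p - x) by rewrite ler_pM2l //; lra.
  lra.
- have above_p b : ema_step beta x b <= p = false.
    by apply/negbTE; rewrite -ltNge; have /andP[] := near_x b; lra.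
  rewrite !above_p ifF; last by apply/negbTE; rewrite -ltNge; lra.
  have : beta * beta <= beta * (x - p) by rewrite ler_pM2l //; lra.
  lra.
Qed.

Lemma bexpect_ema_steps_le p beta x m : 0 <= p <= 1 -> 0 < beta <= 1 -> 0 <= x <= 1 ->
  bexpect p m (fun s => (steps_to (ema_step beta) (in_band p beta) x s)%:R) <= beta ^- 2.
Proof.
move=> p01 beta01 x01; have /andP[beta_gt0 beta_le1] := beta01.
rewrite -[leRHS]mul1r ler_pdivlMr ?exprn_gt0 // mulrC.
apply: le_trans (ema_potential_le1 p x01).
apply: (bexpect_steps_to_le (S := [pred y | 0 <= y <= 1])) => //.
- by move=> y b; apply: ema_step_in01; rewrite ltW.
- by move=> y; apply: ema_potential_ge0.
- by move=> y; apply: ema_potential_drift.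
Qed.

End EmaStep.

Section EmaProcess.
Variables (R : realType) (T : Type) (p beta x : R) (o : nat -> T -> bool).
Hypotheses (beta01 : 0 <= beta <= 1) (x01 : 0 <= x <= 1).

Lemma est_foldl n w : est beta x o n w = foldl (ema_step beta) x (mkseq (o ^~ w) n).
Proof. by elim: n => // n IH; rewrite mkseqS foldl_rcons -IH. Qed.

Lemma est_take k m w : (k <= m)%N ->
  foldl (ema_step beta) x (take k (mkseq (o ^~ w) m)) = est beta x o k w.
Proof. by move=> km; rewrite take_mkseq // est_foldl. Qed.

Lemma est_in01 n w : 0 <= est beta x o n w <= 1.
Proof. by elim: n => //= n IH; apply: ema_step_in01. Qed.

Lemma est_dist n w : `|est beta x o n w - x| <= n%:R * beta.
Proof.
elim: n => [|n IH]; first by rewrite subrr normr0 mul0r.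
rewrite -nat1r mulrDl mul1r; apply: le_trans (ler_distD (est beta x o n w) _ _) _.
by rewrite lerD // ema_step_dist // est_in01.
Qed.

Lemma hit_time_ge_dist w : 0 < beta ->
  ((`|x - p| / beta)%:E <= hit_time p beta x o w)%E.
Proof.
move=> beta_gt0; apply: le_ereal_inf_tmp => _ [n band <-].
rewrite lee_fin ler_pdivrMr // -natr1 mulrDl mul1r.
apply: le_trans (ler_distD (est beta x o n w) _ _) _.
by apply: lerD; [rewrite distrC; exact: est_dist | rewrite ler_distl].
Qed.

Lemma hit_time_first k w : in_band p beta (est beta x o k w) ->
  (forall j, in_band p beta (est beta x o j w) -> (k <= j)%N) ->
  hit_time p beta x o w = (k.+1%:R)%:E.
Proof.
move=> band_k first_k; apply/le_anti/andP; split.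
  by apply: ge_ereal_inf; exists (k.+1%:R)%:E => //; exists k.
apply: le_ereal_inf_tmp => _ [j band_j <-].
by rewrite lee_fin ler_nat ltnS first_k.
Qed.

Lemma hit_time_never w : (forall k, ~~ in_band p beta (est beta x o k w)) ->
  hit_time p beta x o w = +oo%E.
Proof.
move=> never; rewrite /hit_time (_ : [set _ | n in _] = set0) ?ereal_inf0 //.
by apply/seteqP; split => // y [n band_n _]; case/negP: (never n).
Qed.

(* min (hit_time, m + 1), in the paper's 1-based time. *)
Definition hit_time_trunc m w : \bar R :=
  ((steps_to (ema_step beta) (in_band p beta) x (mkseq (o ^~ w) m)).+1%:R)%:E.

Lemma hit_time_cvg w : (hit_time_trunc m w @[m --> \oo] --> hit_time p beta x o w)%classic.
Proof.
have [hit|never] := pselect (exists k, in_band p beta (est beta x o k w)).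
  have [k band_k first_k] := ex_minnP hit.
  rewrite (hit_time_first band_k first_k).
  apply: cvg_near_cst; near=> m; rewrite /hit_time_trunc.
  have km : (k <= m)%N by near: m; exists k.
  rewrite (@steps_to_hit _ _ _ _ _ k) ?size_mkseq ?est_take //.
  move=> j jk; rewrite est_take ?(leq_trans (ltnW jk)) //.
  by apply/negP => /first_k; rewrite leqNgt jk.
have never' k : ~~ in_band p beta (est beta x o k w) by apply/negP => ?; apply: never; exists k.
rewrite hit_time_never //.
have steps_m m : steps_to (ema_step beta) (in_band p beta) x (mkseq (o ^~ w) m) = m.
  by rewrite steps_to_miss ?size_mkseq // => j jm; rewrite est_take // ltnW.
apply/cvgenyP; under eq_fun do rewrite steps_m.
exact: cvg_addnl 1.
Unshelve. all: by end_near.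
Qed.

End EmaProcess.

Section Cylinders.
Variables (d : measure_display) (T : measurableType d) (o : nat -> T -> bool).

Definition cylinder (s : seq bool) : set T :=
  [set w | forall i, (i < size s)%N -> o i w = nth false s i].

Lemma cylinder_mkseq s w : cylinder s w <-> mkseq (o ^~ w) (size s) = s.
Proof.
split => [in_s | <- i]; last by rewrite size_mkseq => lti; rewrite nth_mkseq.
by apply: (@eq_from_nth _ false); rewrite size_mkseq // => i lti; rewrite nth_mkseq ?in_s.
Qed.

Lemma prefix_sum_cylinder (R : pzRingType) (G : seq bool -> R) m w :
  G (mkseq (o ^~ w) m) = \sum_(s <- bool_seqs m) G s * \1_(cylinder s) w.
Proof.
have size_prefix : mkseq (o ^~ w) m \in bool_seqs m by rewrite mem_bool_seqs size_mkseq.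
rewrite (bigD1_seq _ size_prefix (uniq_bool_seqs m)) /= big1_seq ?addr0.
  by rewrite indicE mem_set ?mulr1 // cylinder_mkseq size_mkseq.
move=> s /andP[neq_s]; rewrite mem_bool_seqs => /eqP size_s.
rewrite indicE memNset ?mulr0 // cylinder_mkseq size_s => eq_s.
by rewrite eq_s eqxx in neq_s.
Qed.

Hypothesis o_meas : forall n, measurable [set w | o n w].

Lemma measurable_cylinder s : measurable (cylinder s).
Proof.
apply: bigcap_measurableType => i _ /=; case: (nth false s i); first exact: o_meas.
have -> : (fun w => o i w = false) = ~` [set w | o i w].
  by apply/seteqP; split => w /=; [move=> -> | move/negP/negbTE].
exact/measurableC/o_meas.
Qed.

Lemma measurable_fun_prefix (R : realType) (G : seq bool -> R) m :
  measurable_fun setT (fun w => G (mkseq (o ^~ w) m)).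
Proof.
rewrite (funext (prefix_sum_cylinder G m)); apply: measurable_sum => s.
apply: measurable_funM; first exact: measurable_cst.
exact/measurable_indic/measurable_cylinder.
Qed.

End Cylinders.

Section MeasurableHitTime.
Variables (R : realType) (d : measure_display) (T : measurableType d).
Variables (o : nat -> T -> bool) (p beta x : R).
Hypothesis o_meas : forall n, measurable [set w | o n w].

Lemma measurable_hit_time_trunc m : measurable_fun setT (hit_time_trunc p beta x o m).
Proof.
apply/measurable_EFinP.
exact: (measurable_fun_prefix o_meas (fun s => (steps_to _ _ x s).+1%:R)).
Qed.

Lemma measurable_hit_time : measurable_fun setT (hit_time p beta x o).
Proof.
apply: (emeasurable_fun_cvg _ _ measurable_hit_time_trunc).
by move=> w _; exact: hit_time_cvg.
Qed.

End MeasurableHitTime.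

Section BernoulliPrefix.
Variables (R : realType) (d : measure_display) (T : measurableType d).
Variables (P : probability T R) (o : nat -> T -> bool) (p : R).
Hypothesis o_iid : iid_bernoulli P o p.

Lemma probability_cylinder s : P (cylinder o s) = (bweight p s)%:E.
Proof. by rewrite o_iid.2 /bweight (big_nth false) big_mkord. Qed.

Lemma integral_prefix (G : seq bool -> R) m : (forall s, 0 <= G s) ->
  (\int[P]_w (G (mkseq (o ^~ w) m))%:E = (bexpect p m G)%:E)%E.
Proof.
move=> G_ge0; have o_meas := o_iid.1.
have cyl_meas s : measurable_fun setT (\1_(cylinder o s) : T -> R).
  exact/measurable_indic/measurable_cylinder.
under eq_integral do rewrite (prefix_sum_cylinder o G m) -sumEFin.
rewrite ge0_integral_sum //; last 2 first.
- by move=> s; apply/measurable_EFinP/measurable_funM.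
- by move=> s w _; rewrite lee_fin mulr_ge0.
rewrite /bexpect -sumEFin; apply: eq_bigr => s _.
under eq_integral do rewrite EFinM.
rewrite ge0_integralZl_EFin //; last exact/measurable_EFinP.
rewrite integral_indic ?setIT //; last exact: measurable_cylinder.
by rewrite muleC EFinM -probability_cylinder.
Qed.

End BernoulliPrefix.

Lemma expected_hit_time_le (R : realType) (p beta x : R) d (T : measurableType d)
    (P : probability T R) (o : nat -> T -> bool) :
  0 <= p <= 1 -> 0 < beta <= 1 -> 0 <= x <= 1 -> iid_bernoulli P o p ->
  (\int[P]_w hit_time p beta x o w <= (2 / beta ^+ 2)%:E)%E.
Proof.
move=> p01 beta01 x01 o_iid; have /andP[beta_gt0 beta_le1] := beta01.
set g := hit_time_trunc p beta x o.
have g_meas := measurable_hit_time_trunc p beta x o_iid.1.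
have g_ge0 m w : setT w -> (0 <= g m w)%E by rewrite lee_fin.
have g_nd w : setT w -> nondecreasing_seq (g ^~ w).
  move=> _; apply/nondecreasing_seqP => m.
  by rewrite lee_fin ler_nat ltnS mkseqS -cats1 steps_to_catl.
have mct := @cvg_monotone_convergence _ _ _ P _ measurableT _ g_meas g_ge0 g_nd.
rewrite (eq_integral (fun w => limn (g ^~ w))); last first.
  by move=> w _; apply/esym/cvg_lim => //; exact: hit_time_cvg.
rewrite -(cvg_lim _ mct) //; apply: lime_le; first exact: cvgP mct.
apply: nearW => m.
rewrite (integral_prefix o_iid (G := fun s => (steps_to _ _ x s).+1%:R)) // lee_fin bexpect_succn.
have := bexpect_ema_steps_le m p01 beta01 x01.
have : 1 <= beta ^- 2 by rewrite invf_ge1 ?exprn_gt0 // expr_le1 // ltW.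
lra.
Qed.

Lemma expected_hit_time_ge_dist (R : realType) (p beta x : R) d (T : measurableType d)
    (P : probability T R) (o : nat -> T -> bool) :
  0 < beta <= 1 -> 0 <= x <= 1 -> iid_bernoulli P o p ->
  ((`|x - p| / beta)%:E <= \int[P]_w hit_time p beta x o w)%E.
Proof.
move=> /andP[beta_gt0 beta_le1] x01 o_iid.
rewrite -[leLHS]mule1 -(probability_setT P) -integral_cst //.
apply: ge0_le_integral => //.
- by move=> w _; rewrite lee_fin divr_ge0 // ltW.
- exact: measurable_hit_time o_iid.1.
- by move=> w _; apply: hit_time_ge_dist; rewrite // ltW.
Qed.

Theorem theorem1 (R : realType) :
  (* upper bound: E[first hitting time] = O(beta^-2), uniformly in p*, p1 *)
  (exists C : R, 0 < C /\
     forall (p beta p1 : R) (d : measure_display) (T : measurableType d)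
            (P : probability T R) (o : nat -> T -> bool),
       0 <= p <= 1 -> 0 < beta <= 1 -> 0 <= p1 <= 1 ->
       iid_bernoulli P o p ->
       (\int[P]_w hit_time p beta p1 o w <= (C / beta ^+ 2)%:E)%E)
  /\
  (* lower bound: worst case over the initial estimate is Omega(beta^-1) *)
  (exists c : R, 0 < c /\
     forall (p beta : R), 0 <= p <= 1 -> 0 < beta <= 1 ->
       exists p1 : R, 0 <= p1 <= 1 /\
         forall (d : measure_display) (T : measurableType d)
                (P : probability T R) (o : nat -> T -> bool),
           iid_bernoulli P o p ->
           ((c / beta)%:E <= \int[P]_w hit_time p beta p1 o w)%E).
Proof.
split.
  exists 2; split => // p beta p1 d T P o p01 beta01 p1_01.
  exact: expected_hit_time_le.
exists 2^-1; split => [|p beta p01 beta01]; first by rewrite invr_gt0.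
have /andP[p_ge0 p_le1] := p01; have /andP[beta_gt0 _] := beta01.
pose p1 : R := if p <= 2^-1 then 1 else 0.
have p1_01 : 0 <= p1 <= 1 by rewrite /p1; case: ifP; rewrite ?lexx ?ler01.
have p1_far : 2^-1 <= `|p1 - p|.
  by rewrite /p1; case: ifP => half_p; [rewrite ger0_norm | rewrite ler0_norm]; lra.
exists p1; split => // d T P o o_iid.
apply: le_trans (expected_hit_time_ge_dist beta01 p1_01 o_iid).
by rewrite lee_fin ler_wpM2r // invr_ge0 ltW.
Qed.
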